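(* Let $r,k,p,q$ be integers, all greater than $1$, with $r\ge k$, $p\ge k+1$ and $2\le q\le\binom{p}{k}$. Then \[ F_k(r,p,q) \le r^{\binom{F_{k-1}(r,p-1,q)}{k-1}}. \] Here, when $q>\binom{p-1}{k-1}$, $F_{k-1}(r,p-1,q)$ is interpreted as $p-1$.
   Context: For positive integers $k,p,q$ with $p\ge k+1$ and $2\le q\le\binom{p}{k}$, and a positive integer $r$, $F_k(r,p,q)$ is the minimum integer $n$ such that every coloring of the edges of the complete $k$-uniform hypergraph $K_n^{(k)}$ with $r$ colors contains a copy of $K_p^{(k)}$ (i.e. a set of $p$ vertices) whose edges receive at most $q-1$ distinct colors. (For $k=1$, $K_n^{(1)}$ has the $n$ singletons as edges, so the coloring is a coloring of vertices.) *)

From mathcomp Require Import all_boot.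
From Stdlib Require Import ClassicalEpsilon.

Set Implicit Arguments. Unset Strict Implicit. Unset Printing Implicit Defensive.

(* Colorings of the edges of K_n^(k) with r colours: a function from subsets
   of 'I_n to 'I_r; only its values on k-subsets (the edges) matter. *)

Definition ncolors (n k r : nat) (c : {ffun {set 'I_n} -> 'I_r}) (S : {set 'I_n}) : nat :=
  #|[set c e | e in [pred e : {set 'I_n} | (e \subset S) && (#|e| == k)]]|.

Definition arrows (k r p q n : nat) : bool :=
  [forall c : {ffun {set 'I_n} -> 'I_r},
     [exists S : {set 'I_n}, (#|S| == p) && (ncolors k c S <= q.-1)]].

(* F_k(r,p,q): the minimum such n (0 if none exists; by Ramsey's theorem one
   always exists under the standing hypotheses). *)
Definition F (k r p q : nat) : nat :=
  match excluded_middle_informative (exists n, arrows k r p q n) with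
  | left H => ex_minn H
  | right _ => 0
  end.

From mathcomp Require Import all_boot.
From Stdlib Require Import ClassicalEpsilon.

Set Implicit Arguments. Unset Strict Implicit. Unset Printing Implicit Defensive.

(* Erdos-Rado stepping up.  Colour the (k+1)-subsets of N = r^C(m,k) ordered
   vertices and choose v_1 < ... < v_m < w greedily, so that the colour of a
   (k+1)-subset of them depends only on its k smallest elements: once v_1..v_t
   are chosen, v_(t+1) is the least remaining candidate and the candidates above
   it are split into r^C(t,k-1) classes by the colours of the new edges through
   v_(t+1), keeping the largest class; N candidates suffice for m steps.  A
   p-subset of {v_1..v_m} whose k-subsets use fewer than q colours in the induced
   colouring then yields, together with w, a (p+1)-subset whose (k+1)-subsets
   use the same colours. *)

Lemma ncolors_leq_bin n k r (c : {ffun {set 'I_n} -> 'I_r}) S :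
  ncolors k c S <= 'C(#|S|, k).
Proof.
rewrite /ncolors -cards_draws; apply: leq_trans (leq_imset_card _ _) _.
by apply/eq_leq/eq_card => e; rewrite !inE.
Qed.

Lemma arrows_self k r p q : 'C(p, k) < q -> arrows k r p q p.
Proof.
move=> bin_lt_q; apply/forallP => c; apply/existsP; exists setT.
rewrite cardsT card_ord eqxx /=; apply: leq_trans (ncolors_leq_bin _ _ _) _.
by rewrite cardsT card_ord -ltnS; case: q bin_lt_q.
Qed.

Lemma arrows_geq k r p q n : 0 < r -> arrows k r p q n -> p <= n.
Proof.
move=> r_gt0 /forallP /(_ [ffun=> Ordinal r_gt0]).
move=> /existsP [S /andP [/eqP <- _]].
by apply: leq_trans (max_card S) _; rewrite card_ord.
Qed.

Lemma F_leq k r p q n : arrows k r p q n -> F k r p q <= n.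
Proof.
move=> arr_n; rewrite /F.
case: excluded_middle_informative => [ex|[]]; last by exists n.
by case: ex_minnP => m _; apply.
Qed.

Lemma arrows_F k r p q :
  (exists n, arrows k r p q n) -> arrows k r p q (F k r p q).
Proof.
move=> ex; rewrite /F.
by case: excluded_middle_informative => // ex'; case: ex_minnP.
Qed.

Lemma pigeonhole_class (T : finType) r (f : T -> 'I_r) (S : {set T}) : 0 < r ->
  exists col, #|S| <= r * #|[set x in S | f x == col]|.
Proof.
move=> r_gt0; pose size_of col := #|[set x in S | f x == col]|.
exists [arg max_(col > Ordinal r_gt0) size_of col].
case: arg_maxnP => // col _ col_max.
have -> : #|S| = \sum_(col' < r) size_of col'.
  rewrite -sum1_card (partition_big f xpredT) //=.
  apply: eq_bigr => j _; rewrite /size_of -sum1_card.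
  by apply: eq_bigl => x; rewrite !inE.
rewrite -[X in X * _]card_ord -sum_nat_const.
by apply: leq_sum => j _; apply: col_max.
Qed.

Lemma homogeneous_subset (X : eqType) (T : finType) r (g : X -> T -> 'I_r)
    (s : seq X) (S : {set T}) : 0 < r ->
  exists2 S' : {set T}, S' \subset S &
    (forall B x y, B \in s -> x \in S' -> y \in S' -> g B x = g B y) /\
    #|S| <= r ^ size s * #|S'|.
Proof.
move=> r_gt0; elim: s => [|B s [S1 sub1 [hom1 card1]]].
  by exists S => //; rewrite mul1n.
have [col card_col] := pigeonhole_class (g B) S1 r_gt0.
exists [set x in S1 | g B x == col].
  by apply: subset_trans sub1; apply/subsetP => x; rewrite inE => /andP [].
split.
- move=> B' x y; rewrite inE => /orP [/eqP -> | B's];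
    rewrite !inE => /andP [x1 /eqP gx] /andP [y1 /eqP gy]; first by rewrite gx gy.
  exact: hom1.
- rewrite /= expnS -mulnA; apply: leq_trans card1 _.
  by rewrite mulnCA leq_mul2l card_col orbT.
Qed.

(* Enough candidates to extend an end-homogeneous set of size [t] by [j]
   vertices: one candidate is consumed and the rest are split into
   [r ^ 'C(t, k.-1)] classes, of which the largest must be large enough for
   [j.-1] further steps. *)
Fixpoint greedy_bound (r k t j : nat) : nat :=
  if j is j'.+1 then (r ^ 'C(t, k.-1) * (greedy_bound r k t.+1 j').-1).+2 else 1.

Lemma greedy_bound_gt0 r k t j : 0 < greedy_bound r k t j.
Proof. by case: j. Qed.

Lemma greedy_boundE r k t j : 0 < k ->
  r ^ 'C(t, k) * (greedy_bound r k t j).-1 = \sum_(t <= i < t + j) r ^ 'C(i, k).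
Proof.
case: k => // k _; elim: j t => [|j IH] t /=; first by rewrite addn0 big_geq ?muln0.
rewrite addnS big_ltn ?ltnS ?leq_addr // -addSn -IH.
by rewrite mulnS mulnA -expnD addnC -binS.
Qed.

Lemma sum_exp_bin_lt r k m : 0 < k -> k < r -> k <= m ->
  (\sum_(i < m) r ^ 'C(i, k)).+1 <= r ^ 'C(m, k).
Proof.
move=> k_gt0 k_lt_r /subnKC <-; elim: (m - k) => [|d IH].
  rewrite addn0 binn expn1 (eq_bigr (fun=> 1)) => [|i _]; last by rewrite bin_small.
  by rewrite sum1_card card_ord.
rewrite addnS big_ord_recr /= -addSn; apply: leq_trans (leq_add IH (leqnn _)) _.
case: k k_gt0 k_lt_r IH => // k _ k_lt_r _.
rewrite binS expnD addnn -mul2n mulnC leq_mul2l; apply/orP; right.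
apply: leq_trans (leq_pexp2l _ (_ : 1 <= 'C(k.+1 + d, k))).
- by rewrite expn1; apply: leq_ltn_trans k_lt_r.
- by apply: ltn_trans k_lt_r.
- by rewrite bin_gt0 addSnnS leq_addr.
Qed.

Lemma greedy_bound_leq r k m : 0 < k -> k < r -> k <= m ->
  greedy_bound r k 0 m <= r ^ 'C(m, k).
Proof.
move=> k_gt0 k_lt_r k_le_m; apply: leq_trans (sum_exp_bin_lt k_gt0 k_lt_r k_le_m).
have := greedy_boundE r 0 m k_gt0; rewrite bin0n gtn_eqF // mul1n add0n big_mkord.
by move=> <-; rewrite prednK ?greedy_bound_gt0.
Qed.

Lemma exists_set_min n (S : {set 'I_n}) :
  S != set0 -> exists2 v, v \in S & forall x, x \in S -> v <= x.
Proof.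
case/set0Pn => x0 Sx0.
by case: (arg_minnP val Sx0) => v Sv v_min; exists v.
Qed.

Lemma exists_set_max n (S : {set 'I_n}) :
  S != set0 -> exists2 z, z \in S & forall x, x \in S -> x <= z.
Proof.
case/set0Pn => x0 Sx0.
by case: (arg_maxnP val Sx0) => z Sz z_max; exists z.
Qed.

Lemma subset_imset_ex (aT rT : finType) (f : aT -> rT) (T : {set aT})
    (A : {set rT}) :
  A \subset f @: T -> exists2 B : {set aT}, B \subset T & f @: B = A.
Proof.
move=> /subsetP A_sub; exists [set i in T | f i \in A].
  by apply/subsetP => i; rewrite inE => /andP [].
apply/setP => x; apply/imsetP/idP => [[i] | Ax].
  by rewrite inE => /andP [_ Afi] ->.
by have /imsetP [i Ti Ex] := A_sub x Ax; exists i; rewrite // inE Ti -Ex Ax.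
Qed.

Section EndHomogeneous.

Variables (n r k : nat) (c : {ffun {set 'I_n} -> 'I_r}).
Hypothesis r_gt0 : 0 < r.

Definition end_homog (V S : {set 'I_n}) : Prop :=
  (forall y x, y \in V -> x \in S -> y < x) /\
  (forall (A : {set 'I_n}) x y, A \subset V -> #|A| = k ->
     x \in V :|: S -> y \in V :|: S ->
     (forall a, a \in A -> a < x) -> (forall a, a \in A -> a < y) ->
     c (x |: A) = c (y |: A)).

Lemma end_homogS (V S1 S2 : {set 'I_n}) :
  S2 \subset S1 -> end_homog V S1 -> end_homog V S2.
Proof.
move=> /subsetP sub21 [V_lt hom]; split=> [y x Vy /sub21|A x y]; first exact: V_lt.
have VS21 z : z \in V :|: S2 -> z \in V :|: S1.
  by rewrite !inE => /orP [-> // | /sub21 ->]; rewrite orbT.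
by move=> AV cardA /VS21 x_in /VS21 y_in; apply: hom.
Qed.

Lemma end_homog_extend (V S S' : {set 'I_n}) v :
  end_homog V S -> v \in S -> (forall x, x \in S -> v <= x) ->
  S' \subset S :\ v ->
  (forall (B : {set 'I_n}) x y, B \subset V -> #|B| = k.-1 ->
     x \in S' -> y \in S' -> c (x |: (v |: B)) = c (y |: (v |: B))) ->
  end_homog (v |: V) S'.
Proof.
move=> [V_lt hom] Sv v_min /subsetP sub' hom_v.
have S'S x : x \in S' -> x \in S /\ x != v.
  by move/sub'; rewrite !inE => /andP [].
split=> [y x | A x y AvV cardA x_in y_in A_lt_x A_lt_y].
  rewrite !inE => /orP [/eqP -> | Vy] /S'S [Sx x_neq_v]; last exact: V_lt.
  by rewrite ltn_neqAle v_min // andbT; apply: contra x_neq_v => /eqP/val_inj ->.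
have [Av | Anv] := boolP (v \in A).
- have in_S' z : z \in (v |: V) :|: S' -> (forall a, a \in A -> a < z) -> z \in S'.
    rewrite !inE => /orP [/orP [/eqP -> | Vz] | //] /(_ v Av).
      by rewrite ltnn.
    by move/(ltn_trans (V_lt _ _ Vz Sv)); rewrite ltnn.
  rewrite -(setD1K Av); apply: hom_v; rewrite ?in_S' //.
    apply/subsetP => a; rewrite !inE => /andP [a_neq_v /(subsetP AvV)].
    by rewrite !inE (negbTE a_neq_v).
  by move: cardA; rewrite (cardsD1 v A) Av add1n => <-.
- have AV : A \subset V.
    apply/subsetP => a Aa; move: (subsetP AvV a Aa); rewrite !inE.
    by case/orP => [/eqP Eav | //]; move: Anv; rewrite -Eav Aa.
  have in_VS z : z \in (v |: V) :|: S' -> z \in V :|: S.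
    by rewrite !inE => /orP [/orP [/eqP -> | ->] | /S'S [-> _]];
      rewrite ?Sv ?orbT.
  by apply: hom; rewrite ?in_VS.
Qed.

Lemma end_homog_step (V S : {set 'I_n}) : end_homog V S -> S != set0 ->
  exists v S', [/\ v \notin V, end_homog (v |: V) S' &
                   #|S| <= (r ^ 'C(#|V|, k.-1) * #|S'|).+1].
Proof.
move=> homVS S_neq0; have [v Sv v_min] := exists_set_min S_neq0.
pose s := enum [set B : {set 'I_n} | B \subset V & #|B| == k.-1].
pose g B x := c (x |: (v |: B)).
have [S' sub' [hom' card']] := homogeneous_subset g s (S :\ v) r_gt0.
have Vnv : v \notin V by apply/negP => /(homVS.1 v v)/(_ Sv); rewrite ltnn.
exists v, S'; split=> //.
  apply: end_homog_extend homVS Sv v_min sub' _ => B x y BV cardB x_in y_in.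
  by apply: hom' => //; rewrite mem_enum inE BV cardB /=.
by move: card'; rewrite /s -cardE cards_draws (cardsD1 v S) Sv.
Qed.

Lemma end_homog_greedy j (V S : {set 'I_n}) :
  end_homog V S -> greedy_bound r k #|V| j <= #|S| ->
  exists (V' : {set 'I_n}) w, #|V'| = #|V| + j /\ end_homog V' [set w].
Proof.
elim: j V S => [|j IH] V S homVS card_S.
  have [w Sw] : exists w, w \in S by apply/card_gt0P.
  exists V, w; split; first by rewrite addn0.
  by apply: end_homogS homVS; rewrite sub1set.
have S_neq0 : S != set0 by rewrite -card_gt0; apply: leq_trans card_S.
have [v [S' [Vnv homS' card_S']]] := end_homog_step homVS S_neq0.
have card_vV : #|v |: V| = #|V|.+1 by rewrite cardsU1 Vnv.
have [|V' [w [card_V' homV']]] := IH _ S' homS'; last first.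
  by exists V', w; rewrite card_V' card_vV addSnnS.
rewrite card_vV; apply: leq_trans (leqSpred _) _.
by move: (leq_trans card_S card_S'); rewrite ltnS ltn_pmul2l ?expn_gt0 ?r_gt0.
Qed.

Lemma end_homog_edge (V e : {set 'I_n}) w :
  end_homog V [set w] -> e \subset w |: V -> #|e| = k.+1 ->
  exists A : {set 'I_n},
    [/\ A \subset e, A \subset V, #|A| = k & c e = c (w |: A)].
Proof.
move=> [V_lt hom] /subsetP eV card_e.
have V_lt_w y : y \in V -> y < w by move/V_lt; apply; rewrite set11.
have [z ez z_max] : exists2 z, z \in e & forall x, x \in e -> x <= z.
  by apply: exists_set_max; rewrite -card_gt0 card_e.
have e_lt_z a : a \in e :\ z -> a < z.
  by rewrite !inE ltn_neqAle => /andP [a_neq_z /z_max ->]; rewrite andbT.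
have AV : e :\ z \subset V.
  apply/subsetP => a Aa; have := eV a (subsetP (subD1set e z) a Aa).
  rewrite !inE => /orP [/eqP Eaw | //]; have := e_lt_z a Aa.
  have := eV z ez; rewrite !inE Eaw => /orP [/eqP -> | /V_lt_w].
    by rewrite ltnn.
  by move/ltn_trans => lt_wz /lt_wz; rewrite ltnn.
have card_A : #|e :\ z| = k.
  by move: card_e; rewrite (cardsD1 z e) ez add1n => -[].
exists (e :\ z); split=> //; first exact: subD1set.
rewrite -{1}(setD1K ez); apply: hom => //.
- by have := eV z ez; rewrite !inE orbC.
- by rewrite !inE eqxx orbT.
- by move=> a /(subsetP AV) /V_lt_w.
Qed.

End EndHomogeneous.

Lemma arrows_step k r p q m : 0 < k -> k < r -> k <= m -> arrows k r p q m ->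
  arrows k.+1 r p.+1 q (r ^ 'C(m, k)).
Proof.
move=> k_gt0 k_lt_r k_le_m arr_m; apply/forallP => c.
have r_gt0 : 0 < r := leq_ltn_trans (leq0n k) k_lt_r.
have hom0 : end_homog k c set0 setT.
  split=> [y x | A x y]; first by rewrite inE.
  by rewrite subset0 => /eqP -> /eqP; rewrite cards0 eq_sym gtn_eqF.
have [V [w [card_V homV]]] : exists (V : {set 'I_(r ^ 'C(m, k))}) w,
    #|V| = m /\ end_homog k c V [set w].
  have := end_homog_greedy r_gt0 (j := m) hom0; rewrite cards0 add0n.
  by apply; rewrite cardsT card_ord greedy_bound_leq.
pose phi i := enum_val (cast_ord (esym card_V) i).
have phiV i : phi i \in V by apply: enum_valP.
have phi_inj : injective phi.
  by move=> i j /enum_val_inj /(congr1 val) /= /val_inj.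
have V_lt_w y : y \in V -> y < w by move/homV.1; apply; rewrite set11.
have /existsP [T /andP [/eqP card_T ncol_T]] :=
  forallP arr_m [ffun B : {set 'I_m} => c (w |: phi @: B)].
apply/existsP; exists (w |: phi @: T).
have w_notin : w \notin phi @: T.
  by apply/imsetP => -[i _ E]; move: (V_lt_w _ (phiV i)); rewrite -E ltnn.
rewrite cardsU1 w_notin card_imset // card_T eqxx /=.
apply: leq_trans ncol_T; apply/subset_leq_card/subsetP => col /imsetP [e].
rewrite inE => /andP [e_sub /eqP card_e] ->.
have eV : e \subset w |: V.
  apply: subset_trans e_sub _; apply: setUS; apply/subsetP => _ /imsetP [i _ ->].
  exact: phiV.
have [A [Ae AV card_A ->]] := end_homog_edge homV eV card_e.
have [|B BT defA] := @subset_imset_ex _ _ phi T A.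
  apply/subsetP => a Aa; move: (subsetP e_sub a (subsetP Ae a Aa)); rewrite !inE.
  case/orP => [/eqP Eaw | //].
  by move: (V_lt_w a (subsetP AV a Aa)); rewrite Eaw ltnn.
apply/imsetP; exists B; last by rewrite ffunE defA.
by rewrite inE BT -(card_imset B phi_inj) defA card_A eqxx.
Qed.

Lemma arrows1 r p q : 0 < r -> 1 < q -> arrows 1 r p q (r * p).
Proof.
move=> r_gt0 q_gt1; apply/forallP => c.
have [col] := pigeonhole_class (fun x => c [set x]) [set: 'I_(r * p)] r_gt0.
rewrite cardsT card_ord leq_pmul2l // => /card_geqP [s [uniq_s size_s s_col]].
apply/existsP; exists [set x in s].
rewrite cardsE (card_uniqP uniq_s) size_s eqxx /=.
apply: leq_trans (_ : #|[set col]| <= _); last first.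
  by rewrite cards1; case: q q_gt1 => [|[]].
apply/subset_leq_card/subsetP => col' /imsetP [e]; rewrite inE.
case/andP => e_s /cards1P [x defe] ->; rewrite defe in e_s *.
have /s_col : x \in s by rewrite -[x \in s]inE (subsetP e_s x (set11 x)).
by rewrite !inE => /eqP ->.
Qed.

Lemma arrows_exists k r p q :
  0 < k -> k <= r -> 1 < q -> exists n, arrows k r p q n.
Proof.
move=> + + q_gt1; elim: k p => [//|[_ p _ r_gt0 | k IH [|p] _ k_lt_r]].
- by exists (r * p); apply: arrows1.
- by exists 0; apply: arrows_self; rewrite bin0n ltnW.
have [m arr_m] := IH p isT (ltnW k_lt_r).
have [k_le_m | m_lt_k] := leqP k.+1 m.
  by exists (r ^ 'C(m, k.+1)); apply: arrows_step.
exists p.+1; apply: arrows_self; rewrite bin_small; first exact: ltnW.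
rewrite ltnS; apply: leq_ltn_trans m_lt_k; apply: arrows_geq arr_m.
exact: leq_ltn_trans (leq0n _) k_lt_r.
Qed.

Theorem theorem1p4 (r k p q : nat) :
  1 < r -> 1 < k -> 1 < p -> 1 < q ->
  k <= r -> k.+1 <= p -> 2 <= q -> q <= 'C(p, k) ->
  F k r p q <=
    r ^ 'C(if 'C(p.-1, k.-1) < q then p.-1 else F k.-1 r p.-1 q, k.-1).
Proof.
move=> _ k_gt1 _ q_gt1 k_le_r k_lt_p _ _.
case: k k_gt1 k_le_r k_lt_p => [//|k] k_gt0 k_lt_r.
case: p => [//|p]; rewrite ltnS => k_lt_p /=.
set m := if _ then _ else _.
have [arr_m k_le_m] : arrows k r p q m /\ k <= m.
  rewrite /m; case: ifP => [bin_lt_q | _].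
    by split; [apply: arrows_self | apply: ltnW].
  have arr_F := arrows_F (arrows_exists p k_gt0 (ltnW k_lt_r) q_gt1).
  split=> //; apply: leq_trans (ltnW k_lt_p) (arrows_geq _ arr_F).
  exact: leq_ltn_trans (leq0n k) k_lt_r.
by apply/F_leq/arrows_step.
Qed.
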